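(* Let $m\in\mathbb{N}$. If $S\subseteq\mathbb{N}^{\mathbb{N}}$ is $m$th-order guessable, then $S$ is in $\mathbf{\Delta}'_{m+2}$. More precisely, $S$ is a countable union of countable intersections, and also a countable intersection of countable unions, of sets that are $\mathbf{\Delta}^0_m$ if $m>0$ and clopen if $m=0$.
   Context: Baire space $\mathbb{N}^{\mathbb{N}}$ carries the product of discrete topologies; $\mathbf{\Sigma}^0_n,\mathbf{\Pi}^0_n,\mathbf{\Delta}^0_n$ are the boldface Borel pointclasses. Definition: $\mathbf{\Delta}'_2=\mathbf{\Delta}^0_2$; for $k>2$, $S\in\mathbf{\Delta}'_k$ iff $S$ is a countable union of countable intersections of $\mathbf{\Delta}^0_{k-2}$ sets and also a countable intersection of countable unions of $\mathbf{\Delta}^0_{k-2}$ sets. The language $\mathscr{L}_{\max}$ is the first-order language (with equality) having: a constant symbol $\overline{n}$ for each $n\in\mathbb{N}$; an $n$-ary function symbol $\tilde w$ for each $w:\mathbb{N}^n\to\mathbb{N}$; an $n$-ary predicate symbol $\tilde p$ for each $p\subseteq\mathbb{N}^n$; a special unary function symbol $\mathbf{f}$; and, for every $n$ and every $G:\mathbb{N}^n\times\mathbb{N}^{<\mathbb{N}}\to\mathbb{N}$, an $(n+1)$-ary function symbol $G\circ\mathbf{f}$. For $f\in\mathbb{N}^{\mathbb{N}}$, $\mathscr{M}_f$ is the structure with universe $\mathbb{N}$ interpreting $\overline n$ as $n$, $\tilde w$ as $w$, $\tilde p$ as $p$, $\mathbf f$ as $f$, and $G\circ\mathbf f$ as $(m_1,\dots,m_n,m)\mapsto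 G(m_1,\dots,m_n,f(0),\dots,f(m))$. For a sentence $\phi$, $f(\phi)=1$ if $\mathscr{M}_f\models\phi$ and $f(\phi)=0$ otherwise. Formula classes: ''quantifier-free'' means containing no quantifiers at all (not even bounded ones). $\Sigma_0=\Pi_0=\Delta_0$ is the set of quantifier-free formulas; $\Sigma_{n+1}=\{\exists x\,\phi:\phi\in\Pi_n\}$ and $\Pi_{n+1}=\{\forall x\,\phi:\phi\in\Sigma_n\}$; a formula is $\Delta_{n+1}$ if it is equivalent, in every structure $\mathscr{M}_f$ ($f\in\mathbb{N}^{\mathbb{N}}$), to some $\Sigma_{n+1}$ formula of $\mathscr{L}_{\max}$ and also to some $\Pi_{n+1}$ formula of $\mathscr{L}_{\max}$. For a set $\Sigma$ of symbols of $\mathscr{L}_{\max}$, a sentence ''of $\mathscr{L}_{\max}\cap\Sigma$'' is an $\mathscr{L}_{\max}$-sentence all of whose non-logical symbols lie in $\Sigma$. Definition ($m$th-order guessable): $S\subseteq\mathbb{N}^{\mathbb{N}}$ is $m$th-order guessable if there exist a countable set $\Sigma$ of $\mathscr{L}_{\max}$-symbols, a listing $\phi_0,\phi_1,\dots$ of all $\Delta_m$ sentences of $\mathscr{L}_{\max}\cap\Sigma$, and a function $G:\{0,1\}^{<\mathbb{N}}\to\mathbb{N}$ such that for every $f:\mathbb{N}\to\mathbb{N}$, $\lim_{n\to\infty}G(f(\phi_0),\dots,f(\phi_n))$ equals $1$ if $f\in S$ and $0$ if $f\notin S$. *)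

From mathcomp Require Import all_boot.
From Stdlib Require Import ClassicalEpsilon.
Set Implicit Arguments. Unset Strict Implicit. Unset Printing Implicit Defensive.

Definition baire := nat -> nat.
Definition bset := baire -> Prop.

Definition bcompl (S : bset) : bset := fun x => ~ S x.

(* open in the product of discrete topologies *)
Definition bopen (S : bset) : Prop :=
  forall g, S g -> exists k, forall h, (forall i, i < k -> h i = g i) -> S h.

Definition bclopen (S : bset) : Prop := bopen S /\ bopen (bcompl S).

(* Sigma0 n for n >= 1 (Sigma0 0 is not used; it is set to False).
   Sigma^0_1 = open; Sigma^0_{n+1} = countable unions of Pi^0_n sets,
   Pi^0_n = complements of Sigma^0_n sets. *)
Fixpoint Sigma0 (n : nat) (S : bset) : Prop :=
  match n with
  | 0 => False
  | 1 => bopen S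
  | (k.+1) as n' =>
      exists A : nat -> bset,
        (forall i, Sigma0 k (bcompl (A i))) /\
        (forall x, S x <-> exists i, A i x)
  end.

Definition Pi0 (n : nat) (S : bset) : Prop := Sigma0 n (bcompl S).
Definition Delta0 (n : nat) (S : bset) : Prop := Sigma0 n S /\ Pi0 n S.

Definition union_of_inters (P : bset -> Prop) (S : bset) : Prop :=
  exists A : nat -> nat -> bset,
    (forall i j, P (A i j)) /\ (forall x, S x <-> exists i, forall j, A i j x).

Definition inter_of_unions (P : bset -> Prop) (S : bset) : Prop :=
  exists A : nat -> nat -> bset,
    (forall i j, P (A i j)) /\ (forall x, S x <-> forall i, exists j, A i j x).

Definition Delta' (k : nat) (S : bset) : Prop :=
  if k == 2 then Delta0 2 S
  else union_of_inters (Delta0 (k - 2)) S /\ inter_of_unions (Delta0 (k - 2)) S.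

(* N^n is represented as 'I_n -> nat. *)

Inductive symbol : Type :=
| SymConst (k : nat)
| SymFun (n : nat) (w : ('I_n -> nat) -> nat)
| SymPred (n : nat) (p : ('I_n -> nat) -> Prop)
| SymF
| SymGf (n : nat) (G : ('I_n -> nat) -> seq nat -> nat).    (* G o f, arity n+1 *)

Inductive term : Type :=
| TVar (x : nat)
| TConst (k : nat)
| TFun (n : nat) (w : ('I_n -> nat) -> nat) (args : 'I_n -> term)
| TF (t : term)
| TGf (n : nat) (G : ('I_n -> nat) -> seq nat -> nat) (args : 'I_n -> term) (t : term).

Inductive formula : Type :=
| FEq (t1 t2 : term)
| FPred (n : nat) (p : ('I_n -> nat) -> Prop) (args : 'I_n -> term)
| FNot (A : formula)
| FAnd (A B : formula)
| FOr (A B : formula)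
| FImp (A B : formula)
| FEx (x : nat) (A : formula)
| FAll (x : nat) (A : formula).

Definition upd (e : nat -> nat) (x v : nat) : nat -> nat :=
  fun y => if y == x then v else e y.

Fixpoint teval (f : baire) (e : nat -> nat) (t : term) : nat :=
  match t with
  | TVar x => e x
  | TConst k => k
  | TFun n w args => w (fun i => teval f e (args i))
  | TF t => f (teval f e t)
  | TGf n G args t =>
      G (fun i => teval f e (args i)) (map f (iota 0 (teval f e t).+1))
  end.

Fixpoint sat (f : baire) (e : nat -> nat) (A : formula) : Prop :=
  match A with
  | FEq t1 t2 => teval f e t1 = teval f e t2
  | FPred n p args => p (fun i => teval f e (args i))
  | FNot A => ~ sat f e A
  | FAnd A B => sat f e A /\ sat f e B
  | FOr A B => sat f e A \/ sat f e B
  | FImp A B => sat f e A -> sat f e B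
  | FEx x A => exists v, sat f (upd e x v) A
  | FAll x A => forall v, sat f (upd e x v) A
  end.

Fixpoint tocc (x : nat) (t : term) : Prop :=
  match t with
  | TVar y => x = y
  | TConst _ => False
  | TFun n w args => exists i, tocc x (args i)
  | TF t => tocc x t
  | TGf n G args t => (exists i, tocc x (args i)) \/ tocc x t
  end.

Fixpoint free (x : nat) (A : formula) : Prop :=
  match A with
  | FEq t1 t2 => tocc x t1 \/ tocc x t2
  | FPred n p args => exists i, tocc x (args i)
  | FNot A => free x A
  | FAnd A B | FOr A B | FImp A B => free x A \/ free x B
  | FEx y A | FAll y A => x <> y /\ free x A
  end.

Definition sentence (A : formula) : Prop := forall x, ~ free x A.

Fixpoint term_in (Sig : symbol -> Prop) (t : term) : Prop :=
  match t with
  | TVar _ => True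
  | TConst k => Sig (SymConst k)
  | TFun n w args => Sig (SymFun w) /\ forall i, term_in Sig (args i)
  | TF t => Sig SymF /\ term_in Sig t
  | TGf n G args t => Sig (SymGf G) /\ (forall i, term_in Sig (args i)) /\ term_in Sig t
  end.

Fixpoint formula_in (Sig : symbol -> Prop) (A : formula) : Prop :=
  match A with
  | FEq t1 t2 => term_in Sig t1 /\ term_in Sig t2
  | FPred n p args => Sig (SymPred p) /\ forall i, term_in Sig (args i)
  | FNot A => formula_in Sig A
  | FAnd A B | FOr A B | FImp A B => formula_in Sig A /\ formula_in Sig B
  | FEx _ A | FAll _ A => formula_in Sig A
  end.

Fixpoint qfree (A : formula) : Prop :=
  match A with
  | FEq _ _ | FPred _ _ _ => True
  | FNot A => qfree A
  | FAnd A B | FOr A B | FImp A B => qfree A /\ qfree B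
  | FEx _ _ | FAll _ _ => False
  end.

Fixpoint isSigma (n : nat) (A : formula) : Prop :=
  match n with
  | 0 => qfree A
  | k.+1 => match A with FEx _ B => isPi k B | _ => False end
  end
with isPi (n : nat) (A : formula) : Prop :=
  match n with
  | 0 => qfree A
  | k.+1 => match A with FAll _ B => isSigma k B | _ => False end
  end.

Definition equiv_all (A B : formula) : Prop :=
  forall (f : baire) (e : nat -> nat), sat f e A <-> sat f e B.

Definition isDelta (n : nat) (A : formula) : Prop :=
  match n with
  | 0 => qfree A
  | k.+1 => (exists B, isSigma k.+1 B /\ equiv_all A B) /\
            (exists B, isPi k.+1 B /\ equiv_all A B)
  end.

Definition fval (f : baire) (A : formula) : bool :=
  if excluded_middle_informative (sat f (fun _ => 0) A) then true else false.

Definition countable_syms (Sig : symbol -> Prop) : Prop :=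
  exists g : nat -> option symbol, forall s, Sig s -> exists k, g k = Some s.

Definition guessable (m : nat) (S : bset) : Prop :=
  exists (Sig : symbol -> Prop) (phi : nat -> formula) (G : seq bool -> nat),
    countable_syms Sig /\
    (forall k, isDelta m (phi k) /\ sentence (phi k) /\ formula_in Sig (phi k)) /\
    (forall A, isDelta m A -> sentence A -> formula_in Sig A -> exists k, phi k = A) /\
    (forall f : baire,
       let Gn n := G (map (fun k => fval f (phi k)) (iota 0 n.+1)) in
       (S f -> exists N, forall n, N <= n -> Gn n = 1) /\
       (~ S f -> exists N, forall n, N <= n -> Gn n = 0)).

Definition base_class (m : nat) : bset -> Prop :=
  if m == 0 then bclopen else Delta0 m.

(* Fix a guessable S with its listing phi_0, phi_1, ... of Delta_m sentences
   and guessing function G.  The proof has three independent parts.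
   1. Topology of definability: a term of L_max evaluated in M_f only reads
      finitely many values of f, so quantifier-free formulas define clopen
      sets; each unbounded quantifier is a countable union or intersection,
      so Sigma_n / Pi_n formulas define Sigma^0_n / Pi^0_n sets, and a
      Delta_m sentence defines a Delta^0_m set (clopen if m = 0).
   2. Boolean algebras of sets: Delta^0_n is one (n >= 1, Delta^0_1 being the
      clopen sets), hence contains every Boolean combination of finitely many
      of its members, in particular each stage f |-> G(f(phi_0),...,f(phi_n)).
   3. Limits: S = {f | the guesses are eventually 1}
               = {f | the guesses are nonzero infinitely often},
      which are the two required normal forms; for m = 0 a countable union of
      countable intersections of clopen sets is Sigma^0_2, giving Delta^0_2. *)

From mathcomp Require Import all_boot.
From Stdlib Require Import Classical ClassicalEpsilon FunctionalExtensionality.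
Set Implicit Arguments. Unset Strict Implicit. Unset Printing Implicit Defensive.

Definition near (f : baire) (P : baire -> Prop) : Prop :=
  exists k, forall h, (forall i, i < k -> h i = f i) -> P h.

Lemma near_mono f (P Q : baire -> Prop) :
  (forall h, P h -> Q h) -> near f P -> near f Q.
Proof. by move=> PQ [k Hk]; exists k => h /Hk /PQ. Qed.

Lemma nearI f (P Q : baire -> Prop) :
  near f P -> near f Q -> near f (fun h => P h /\ Q h).
Proof.
move=> [k1 H1] [k2 H2]; exists (maxn k1 k2) => h Hh; split.
- by apply: H1 => i Hi; apply: Hh; rewrite leq_max Hi.
- by apply: H2 => i Hi; apply: Hh; rewrite leq_max Hi orbT.
Qed.

Lemma near_big f n (P : 'I_n -> baire -> Prop) :
  (forall i, near f (P i)) -> near f (fun h => forall i, P i h).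
Proof.
move=> HP; have [k Hk] := choice _ HP.
exists (\max_(i < n) k i) => h Hh i; apply: Hk => j Hj; apply: Hh.
exact: leq_trans Hj (leq_bigmax i).
Qed.

Lemma near_prefix f n : near f (fun h => forall i, i < n -> h i = f i).
Proof. by exists n. Qed.

Lemma near_coord f i : near f (fun h => h i = f i).
Proof. by apply: near_mono (near_prefix f i.+1) => h; apply. Qed.

(* A term only inspects finitely many values of f: its value is locally
   constant in f. *)
Lemma teval_near f e t : near f (fun h => teval h e t = teval f e t).
Proof.
elim: t => [x|c|n w args IH|t IH|n G args IH t IHt]; cbn [teval].
- by exists 0.
- by exists 0.
- apply: near_mono (near_big IH) => h Hargs.
  by congr w; apply: functional_extensionality.
- by apply: near_mono (nearI IH (near_coord f (teval f e t))) => h [-> ->].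
- apply: near_mono (nearI (near_big IH)
    (nearI IHt (near_prefix f (teval f e t).+1))) => h [Hargs [-> Hpre]].
  congr G; first exact: functional_extensionality.
  by apply/eq_in_map => i; rewrite mem_iota add0n => /andP[_ /Hpre].
Qed.

Lemma sat_qfree_near A f e : qfree A ->
  near f (fun h => sat h e A <-> sat f e A).
Proof.
elim: A => /= [t1 t2|n p args|A IH|A IHA B IHB|A IHA B IHB|A IHA B IHB|//|//].
- move=> _; apply: near_mono (nearI (teval_near f e t1) (teval_near f e t2)).
  by move=> h [-> ->].
- move=> _; apply: near_mono (near_big (fun i => teval_near f e (args i))).
  by move=> h Hargs; rewrite (functional_extensionality _ _ Hargs).
- by move=> /IH; apply: near_mono => h ->.
- by move=> [/IHA HA /IHB HB]; apply: near_mono (nearI HA HB) => h; tauto.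
- by move=> [/IHA HA /IHB HB]; apply: near_mono (nearI HA HB) => h; tauto.
- by move=> [/IHA HA /IHB HB]; apply: near_mono (nearI HA HB) => h; tauto.
Qed.

Lemma bcomplK S x : bcompl (bcompl S) x <-> S x.
Proof. by rewrite /bcompl; split; [exact: NNPP | tauto]. Qed.

Lemma Sigma0_SS k S : Sigma0 k.+2 S = exists A : nat -> bset,
  (forall i, Sigma0 k.+1 (bcompl (A i))) /\ (forall x, S x <-> exists i, A i x).
Proof. by []. Qed.

Lemma Sigma0_ext n S T : Sigma0 n S -> (forall x, S x <-> T x) -> Sigma0 n T.
Proof.
case: n => [|[|k]] //.
- by move=> HS E g /E /HS; apply: near_mono => h /E.
- by rewrite !Sigma0_SS => -[A [HA HS]] E; exists A; split => // x; rewrite -E.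
Qed.

Lemma Sigma0_full_empty n :
  Sigma0 n.+1 (fun _ => True) /\ Sigma0 n.+1 (fun _ => False).
Proof.
elim: n => [|n [IHfull IHempty]]; first by split=> [g _|//]; exists 0.
rewrite !Sigma0_SS; split.
- exists (fun _ _ => True); split=> [i|x]; last by split=> // _; exists 0.
  by apply: Sigma0_ext IHempty _ => x; rewrite /bcompl; tauto.
- exists (fun _ _ => False); split=> [i|x]; last by split=> // -[].
  by apply: Sigma0_ext IHfull _ => x; rewrite /bcompl; tauto.
Qed.

(* Each Sigma^0_n (n >= 1) is closed under countable unions: at level k+2 the
   countably many countable unions are merged into one, indexed by pairs. *)
Lemma Sigma0_bigcup n (A : nat -> bset) :
  (forall i, Sigma0 n.+1 (A i)) -> Sigma0 n.+1 (fun x => exists i, A i x).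
Proof.
case: n => [|k] HA.
- by move=> g [i Hi]; apply: near_mono (HA i g Hi) => h Hh; exists i.
- have {}HA i : exists B : nat -> bset, (forall j, Sigma0 k.+1 (bcompl (B j))) /\
      (forall x, A i x <-> exists j, B j x) by rewrite -Sigma0_SS.
  have [B HB] := choice _ HA.
  rewrite Sigma0_SS.
  exists (fun p => let ij := odflt (0, 0) (unpickle p) in B ij.1 ij.2).
  split=> [p|x]; first exact: (proj1 (HB _)).
  split=> [[i /(proj2 (HB i)) [j Hj]]|[p Hp]].
  + by exists (pickle (i, j)); rewrite /= pickleK.
  + exists (odflt (0, 0) (unpickle p)).1; apply/(proj2 (HB _)).
    by exists (odflt (0, 0) (unpickle p)).2.
Qed.

(* Binary unions, as countable unions of the sequence S, T, T, ... *)
Lemma Sigma0_union n S T :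
  Sigma0 n S -> Sigma0 n T -> Sigma0 n (fun x => S x \/ T x).
Proof.
case: n => [//|n] HS HT.
apply: Sigma0_ext (@Sigma0_bigcup n (fun i => if i is 0 then S else T) _) _.
  by case.
by move=> x; split=> [[[|i] Hi]|[Hx|Hx]]; by [left|right|exists 0|exists 1].
Qed.

(* Binary intersections: at level 1 by shrinking neighbourhoods, at level k+2
   by distributing, since the intersection of two Pi^0_{k+1} sets is the
   complement of a union of two Sigma^0_{k+1} sets. *)
Lemma Sigma0_inter n S T :
  Sigma0 n S -> Sigma0 n T -> Sigma0 n (fun x => S x /\ T x).
Proof.
case: n => [|[|k]] //.
- by move=> HS HT g [/HS Hg1 /HT Hg2]; exact: nearI.
- rewrite !Sigma0_SS => -[A [HA ES]] [B [HB ET]].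
  exists (fun p x => let ij := odflt (0, 0) (unpickle p) in A ij.1 x /\ B ij.2 x).
  split=> [p|x].
  + set ij := odflt (0, 0) (unpickle p).
    apply: Sigma0_ext (Sigma0_union (HA ij.1) (HB ij.2)) _ => x.
    by rewrite /bcompl; split; [tauto | exact: not_and_or].
  + split=> [[/ES [i Hi] /ET [j Hj]]|[p /= [Hp1 Hp2]]].
    * by exists (pickle (i, j)); rewrite /= pickleK.
    * by split; [apply/ES | apply/ET]; eexists; eassumption.
Qed.

Record set_algebra (C : bset -> Prop) : Prop := SetAlgebra {
  sa_ext : forall S T, C S -> (forall x, S x <-> T x) -> C T;
  sa_full : C (fun _ => True);
  sa_compl : forall S, C S -> C (bcompl S);
  sa_inter : forall S T, C S -> C T -> C (fun x => S x /\ T x) }.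

Section SetAlgebra.
Variables (C : bset -> Prop) (HC : set_algebra C).

Lemma sa_empty : C (fun _ => False).
Proof.
by apply: (sa_ext HC (sa_compl HC (sa_full HC))) => x; rewrite /bcompl; tauto.
Qed.

Lemma sa_union S T : C S -> C T -> C (fun x => S x \/ T x).
Proof.
move=> CS CT; have CST := sa_inter HC (sa_compl HC CS) (sa_compl HC CT).
apply: (sa_ext HC (sa_compl HC CST)) => x; rewrite /bcompl; tauto.
Qed.

(* Any property of the finitely many bits [b k f] (k in l) defines a set in
   C, as soon as every bit does: split on the first bit and recurse. *)
Lemma sa_bool_combination (b : nat -> baire -> bool) :
  (forall k, C (fun f => b k f = true)) ->
  forall (l : seq nat) (H : seq bool -> Prop), C (fun f => H (map (b^~ f) l)).
Proof.
move=> Cb; elim=> [|k l IH] H /=.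
  case: (classic (H [::])) => HH.
  - by apply: (sa_ext HC (sa_full HC)).
  - by apply: (sa_ext HC sa_empty).
apply: (sa_ext HC (sa_union (sa_inter HC (Cb k) (IH (fun s => H (true :: s))))
  (sa_inter HC (sa_compl HC (Cb k)) (IH (fun s => H (false :: s)))))) => f.
by rewrite /bcompl; case: (b k f); intuition.
Qed.

End SetAlgebra.

Lemma Delta0_algebra n : set_algebra (Delta0 n.+1).
Proof.
have [full empty] := Sigma0_full_empty n.
split.
- move=> S T [SS PS] E; split; first exact: Sigma0_ext SS E.
  by apply: Sigma0_ext PS _ => x; rewrite /bcompl E.
- by split=> //; apply: Sigma0_ext empty _ => x; rewrite /bcompl; tauto.
- by move=> S [SS PS]; split=> //; apply: Sigma0_ext SS _ => x; rewrite bcomplK.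
- move=> S T [SS PS] [ST PT]; split; first exact: Sigma0_inter.
  apply: Sigma0_ext (Sigma0_union PS PT) _ => x.
  by rewrite /bcompl; split; [tauto | exact: not_and_or].
Qed.

(* Quantifier-free formulas define clopen sets, Sigma_{n+1} formulas
   Sigma^0_{n+1} sets and Pi_{n+1} formulas Pi^0_{n+1} sets: each unbounded
   quantifier over N is a countable union or intersection, and at the bottom
   the matrix is locally constant (sat_qfree_near). *)
Lemma sat_qfree_clopen A e : qfree A -> Delta0 1 (fun f => sat f e A).
Proof.
move=> qA; split=> g Hg; have := sat_qfree_near g e qA.
- by apply: near_mono => h ->.
- by apply: near_mono => h; rewrite /bcompl => ->.
Qed.

Lemma sat_Sigma_Pi n A e :
  (isSigma n.+1 A -> Sigma0 n.+1 (fun f => sat f e A)) /\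
  (isPi n.+1 A -> Pi0 n.+1 (fun f => sat f e A)).
Proof.
elim: n A e => [|n IH] [] // x A e; split=> // qA; simpl in qA.
- apply: Sigma0_ext (@Sigma0_bigcup 0 (fun v f => sat f (upd e x v) A) _) _ => //.
  by move=> v; case: (sat_qfree_clopen (upd e x v) qA).
- apply: Sigma0_ext (@Sigma0_bigcup 0 (fun v f => ~ sat f (upd e x v) A) _) _.
    by move=> v; case: (sat_qfree_clopen (upd e x v) qA).
  by move=> f; rewrite /bcompl; split=> [[v Hv] H|/not_all_ex_not //]; exact: Hv.
- rewrite Sigma0_SS; exists (fun v f => sat f (upd e x v) A); split=> // v.
  exact: (proj2 (IH A (upd e x v)) qA).
- rewrite /Pi0 Sigma0_SS; exists (fun v f => ~ sat f (upd e x v) A); split.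
    move=> v; apply: Sigma0_ext (proj1 (IH A (upd e x v)) qA) _ => f.
    by rewrite bcomplK.
  by move=> f; rewrite /bcompl; split=> [/not_all_ex_not //|[v Hv] H]; exact: Hv.
Qed.

Lemma fval_true f A : fval f A = true <-> sat f (fun _ => 0) A.
Proof. by rewrite /fval; case: excluded_middle_informative. Qed.

Lemma Delta_sentence_set m A :
  isDelta m A -> Delta0 m.-1.+1 (fun f => fval f A = true).
Proof.
case: m => [|n] /= HA.
  apply: (sa_ext (Delta0_algebra 0) (sat_qfree_clopen (fun _ => 0) HA)) => f.
  by rewrite fval_true.
case: HA => [[B [SB EB]] [B' [PB' EB']]]; split.
- apply: Sigma0_ext (proj1 (sat_Sigma_Pi n B (fun _ => 0)) SB) _ => f.
  by rewrite fval_true EB.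
- apply: Sigma0_ext (proj2 (sat_Sigma_Pi n B' (fun _ => 0)) PB') _ => f.
  by rewrite /bcompl fval_true EB'.
Qed.

Definition eventually_eq (u : nat -> nat) (v : nat) : Prop :=
  exists N, forall n, N <= n -> u n = v.

Lemma limit_01_characterization (P : Prop) (u : nat -> nat) :
  (P -> eventually_eq u 1) -> (~ P -> eventually_eq u 0) ->
  (P <-> eventually_eq u 1) /\ (P <-> forall N, exists n, N <= n /\ u n <> 0).
Proof.
move=> lim1 lim0; split; split.
- exact: lim1.
- move=> [N HN]; apply: NNPP => /lim0 [N' HN'].
  by have := HN (maxn N N') (leq_maxl _ _); rewrite HN' ?leq_maxr.
- move=> /lim1 [N HN] N'; exists (maxn N' N); rewrite leq_maxl HN ?leq_maxr //.
- move=> Hinf; apply: NNPP => /lim0 [N HN].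
  by have [n [leNn]] := Hinf N; rewrite HN.
Qed.

(* Each stage "guess n f" is a Boolean combination of finitely
   many bits. *)
Lemma limit_decided_sets C (b : nat -> baire -> bool) (G : seq bool -> nat) S :
  set_algebra C -> (forall k, C (fun f => b k f = true)) ->
  (forall f, let guess n := G (map (b^~ f) (iota 0 n.+1)) in
     (S f -> eventually_eq guess 1) /\ (~ S f -> eventually_eq guess 0)) ->
  union_of_inters C S /\ inter_of_unions C S.
Proof.
move=> HC Cb lim.
have stage (n : nat) (Q : nat -> Prop) :
    C (fun f => Q (G (map (b^~ f) (iota 0 n.+1)))).
  exact: (sa_bool_combination HC Cb (iota 0 n.+1) (fun s => Q (G s))).
split.
- exists (fun N n f => N <= n -> G (map (b^~ f) (iota 0 n.+1)) = 1); split.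
    by move=> N n; apply: (stage n (fun v => N <= n -> v = 1)).
  by move=> f; have [E _] := limit_01_characterization (lim f).1 (lim f).2.
- exists (fun N n f => N <= n /\ G (map (b^~ f) (iota 0 n.+1)) <> 0); split.
    by move=> N n; apply: (stage n (fun v => N <= n /\ v <> 0)).
  by move=> f; have [_ E] := limit_01_characterization (lim f).1 (lim f).2.
Qed.

(* Countable intersections of clopen sets are closed, so a countable union of
   them is Sigma^0_2. *)
Lemma union_of_clopen_inters_Sigma2 S :
  union_of_inters (Delta0 1) S -> Sigma0 2 S.
Proof.
move=> [A [HA E]]; rewrite Sigma0_SS.
exists (fun i x => forall j, A i j x); split=> // i.
have closed_compl j : Sigma0 1 (bcompl (A i j)) := (HA i j).2.
apply: Sigma0_ext (Sigma0_bigcup closed_compl) _.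
by move=> x; rewrite /bcompl; split=> [[j Hj] H|/not_all_ex_not //]; exact: Hj.
Qed.

Lemma inter_of_unions_compl C S : set_algebra C ->
  inter_of_unions C S -> union_of_inters C (bcompl S).
Proof.
move=> HC [A [HA E]]; exists (fun i j => bcompl (A i j)); split.
  by move=> i j; exact: sa_compl.
move=> x; rewrite /bcompl E; split.
- by move=> /not_all_ex_not [i Hi]; exists i => j Hj; apply: Hi; exists j.
- by move=> [i Hi] H; have [j Hj] := H i; exact: Hi Hj.
Qed.

Lemma Delta'_of_normal_forms m S :
  union_of_inters (Delta0 m.-1.+1) S -> inter_of_unions (Delta0 m.-1.+1) S ->
  Delta' (m + 2) S.
Proof.
rewrite /Delta' addn2 subn2; case: m => [|n] /= UI IU; last by split.
split; first exact: union_of_clopen_inters_Sigma2.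
exact: union_of_clopen_inters_Sigma2 (inter_of_unions_compl (Delta0_algebra 0) IU).
Qed.

(* The base class of the theorem is Delta^0_m, read as Delta^0_1 when m = 0. *)
Lemma base_class_Delta0 m : base_class m = Delta0 m.-1.+1.
Proof. by case: m. Qed.

Theorem mainTheorem11 (m : nat) (S : bset) :
  guessable m S ->
  Delta' (m + 2) S /\
  union_of_inters (base_class m) S /\ inter_of_unions (base_class m) S.
Proof.
move=> [Sig [phi [G [_ [Hphi [_ lim]]]]]].
have bits k : Delta0 m.-1.+1 (fun f => fval f (phi k) = true).
  exact: Delta_sentence_set (Hphi k).1.
have [UI IU] := limit_decided_sets (Delta0_algebra _) bits lim.
by rewrite base_class_Delta0; split; first exact: Delta'_of_normal_forms.
Qed.
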